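(* Let $(B,\mathscr O)$ be a brace block with $B$ finite. Then for all $\circ,\star\in\mathscr O$, every Galois field extension $L/K$ whose Galois group is isomorphic to $(B,\circ)$ admits a Hopf–Galois structure of type $(B,\star)$.
   Context: A skew left brace is a triple $(B,\cdot,\circ)$ where $(B,\cdot),(B,\circ)$ are groups and $a\circ(b\cdot c)=(a\circ b)\cdot a^{-1}\cdot(a\circ c)$ for all $a,b,c\in B$, with $a^{-1}$ the inverse in $(B,\cdot)$. A brace block is a set $B$ with a collection $\mathscr O$ of binary operations on $B$ such that $(B,\circ,\star)$ is a skew left brace for every $\circ,\star\in\mathscr O$. For a finite Galois extension $L/K$ with group $\Gamma$, a Hopf–Galois structure of type $N$ is (by Greither–Pareigis) one arising as $L[N']^{\Gamma}$ from a regular subgroup $N'\le\operatorname{Perm}(\Gamma)$ isomorphic to $N$ and normalized by the left regular representation $\lambda(\Gamma)$; equivalently a $K$-Hopf algebra $H$ acting on $L$ making $L/K$ an $H$-Hopf–Galois extension with $L\otimes_K H\cong L[N]$. *)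

From HB Require Import structures.
From mathcomp Require Import all_boot all_algebra all_fingroup all_field.
Set Implicit Arguments. Unset Strict Implicit. Unset Printing Implicit Defensive.
Local Open Scope group_scope.

Definition is_identity (B : Type) (op : B -> B -> B) (e : B) : Prop :=
  forall x, op e x = x /\ op x e = x.

Definition is_group (B : Type) (op : B -> B -> B) : Prop :=
  (forall a b c, op a (op b c) = op (op a b) c) /\
  exists e, is_identity op e /\ forall a, exists a', op a a' = e /\ op a' a = e.

Definition is_inv (B : Type) (op : B -> B -> B) (a a' : B) : Prop :=
  exists e, is_identity op e /\ op a a' = e /\ op a' a = e.

Definition skew_brace (B : Type) (dot circ : B -> B -> B) : Prop :=
  is_group dot /\ is_group circ /\
  forall a b c a', is_inv dot a a' ->
    circ a (dot b c) = dot (dot (circ a b) a') (circ a c).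

Definition brace_block (B : Type) (O : (B -> B -> B) -> Prop) : Prop :=
  forall o s, O o -> O s -> skew_brace o s.

Definition op_isom (B : Type) (op : B -> B -> B) (gT : finGroupType)
    (f : B -> gT) (H : {set gT}) : Prop :=
  injective f /\ (forall b, f b \in H) /\ (forall h, h \in H -> exists b, f b = h) /\
  forall a b, f (op a b) = f a * f b.

Definition op_isog (B : Type) (op : B -> B -> B) (gT : finGroupType) (H : {set gT}) :=
  exists f : B -> gT, op_isom op f H.

Definition lreg (gT : finGroupType) (g : gT) : {perm gT} := perm (mulgI g).

Definition lambda_img (gT : finGroupType) : {set {perm gT}} := [set lreg g | g : gT].

Definition regular_perm (gT : finGroupType) (N : {group {perm gT}}) : Prop :=
  forall x y : gT, exists! n, n \in N /\ n x = y.

(* Hopf--Galois structure of type (B, star) on a Galois extension with Galois group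
   Gamma, via the Greither--Pareigis correspondence: a regular subgroup N of
   Perm(Gamma) isomorphic to (B, star) and normalized by lambda(Gamma). *)
Definition has_HGS_type (gT : finGroupType) (B : Type) (star : B -> B -> B) : Prop :=
  exists N : {group {perm gT}},
    [/\ regular_perm N, op_isog star (N : {set {perm gT}}) &
        lambda_img gT \subset 'N(N)].

(* For a Galois extension E/K inside a splitting field L, the Galois group is
   'Gal(E / K); Perm(Gamma) is taken on the finGroupType [subg 'Gal(E / K)]. *)
Definition galois_has_HGS_type (F0 : fieldType) (L : splittingFieldType F0)
    (K E : {subfield L}) (B : Type) (star : B -> B -> B) : Prop :=
  has_HGS_type (subg_of 'Gal(E / K)%G) star.

(* Let (B, ., o) be a skew brace and phi : (B, o) -> Gamma an isomorphism.
   Transporting the right translations x |-> x . a of (B, .) to Gamma along phi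
   gives a regular subgroup N of Perm(Gamma) isomorphic to (B, .).  The brace
   identity  h o (x . a) = (h o x) . h^-1 . (h o a)  says exactly that
   conjugating the translation by a with lambda(phi h) is the translation by
   h^-1 . (h o a), so lambda(Gamma) normalises N.  In a brace block every pair
   of operations forms a skew brace, whence the theorem by Greither--Pareigis
   (the Galois hypotheses are only needed for that correspondence, which is
   built into the definition of a Hopf--Galois structure of a given type). *)
From HB Require Import structures.
From mathcomp Require Import all_boot all_algebra all_fingroup all_field.
Set Implicit Arguments. Unset Strict Implicit. Unset Printing Implicit Defensive.
Local Open Scope group_scope.

Section RightTranslation.

Variables (B : Type) (dot : B -> B -> B) (e : B).
Hypotheses (dotA : associative dot) (dot1x : left_id e dot) (dotx1 : right_id e dot).
Hypothesis dotV : forall a, exists a', dot a a' = e /\ dot a' a = e.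

Variables (gT : finGroupType) (phi : B -> gT) (psi : gT -> B).
Hypotheses (phiK : cancel phi psi) (psiK : cancel psi phi).

Lemma rtrans_subproof a : injective (fun x => phi (dot (psi x) a)).
Proof.
move=> x y /= /(can_inj phiK) xa_ya; apply: (can_inj psiK).
have [a' [aa' _]] := dotV a.
by rewrite -[psi x]dotx1 -[psi y]dotx1 -aa' !dotA xa_ya.
Qed.

Definition rtrans a : {perm gT} := perm (@rtrans_subproof a).

Lemma rtransE a x : rtrans a x = phi (dot (psi x) a).
Proof. exact: permE. Qed.

Lemma rtransM a b : rtrans (dot a b) = rtrans a * rtrans b.
Proof. by apply/permP => x; rewrite permM !rtransE phiK dotA. Qed.

Lemma rtrans1 : rtrans e = 1.
Proof. by apply/permP => x; rewrite perm1 rtransE dotx1 psiK. Qed.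

Lemma rtrans_inj : injective rtrans.
Proof.
move=> a b /(congr1 (fun p : {perm gT} => psi (p (phi e)))).
by rewrite /= !rtransE !phiK !dot1x.
Qed.

Definition rtrans_set := [set rtrans (psi x) | x : gT].

Lemma mem_rtrans b : rtrans b \in rtrans_set.
Proof. by rewrite -[b]phiK imset_f. Qed.

Lemma rtrans_setP p : reflect (exists b, p = rtrans b) (p \in rtrans_set).
Proof.
apply: (iffP idP) => [/imsetP[x _ ->] | [b ->]]; last exact: mem_rtrans.
by exists (psi x).
Qed.

Lemma group_set_rtrans : group_set rtrans_set.
Proof.
apply/group_setP; split; first by rewrite -rtrans1 mem_rtrans.
by move=> _ _ /rtrans_setP[a ->] /rtrans_setP[b ->]; rewrite -rtransM mem_rtrans.
Qed.

Canonical rtrans_group := Group group_set_rtrans.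

Lemma regular_rtrans : regular_perm rtrans_group.
Proof.
move=> x y; have [x' [xx' x'x]] := dotV (psi x).
exists (rtrans (dot x' (psi y))); split.
  by rewrite mem_rtrans // rtransE dotA xx' dot1x psiK.
move=> _ [/rtrans_setP[b ->] /(congr1 psi)]; rewrite rtransE phiK => <-.
by rewrite dotA x'x dot1x.
Qed.

Lemma op_isog_rtrans : op_isog dot (rtrans_group : {set {perm gT}}).
Proof.
exists rtrans; split; first exact: rtrans_inj.
split; first exact: mem_rtrans.
by split; [move=> _ /rtrans_setP[b ->]; exists b | exact: rtransM].
Qed.

Variable circ : B -> B -> B.
Hypothesis phiM : {morph phi : a b / circ a b >-> a * b}.
Hypothesis brace_law : forall a b c a', is_inv dot a a' ->
  circ a (dot b c) = dot (dot (circ a b) a') (circ a c).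

Lemma rtransJ g g' a : is_inv dot (psi g) g' ->
  rtrans a ^ lreg g = rtrans (dot g' (circ (psi g) a)).
Proof.
move=> gg'; apply/permP => y; rewrite conjgE !permM.
set y' := (lreg g)^-1 y.
have gy' : g * y' = y by rewrite /y' -{2}(permKV (lreg g) y) /lreg permE.
have psi_y : circ (psi g) (psi y') = psi y.
  by rewrite -[circ _ _]phiK phiM !psiK gy'.
by rewrite rtransE /lreg permE -{1}(psiK g) -phiM (brace_law _ _ gg') psi_y -dotA rtransE.
Qed.

Lemma lambda_norm_rtrans : lambda_img gT \subset 'N(rtrans_group).
Proof.
apply/subsetP => _ /imsetP[g _ ->]; rewrite inE.
apply/subsetP => _ /imsetP[_ /rtrans_setP[a ->] ->].
have [g' [gg' g'g]] := dotV (psi g).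
by rewrite (@rtransJ g g') ?mem_rtrans //; exists e.
Qed.

Lemma has_HGS_type_rtrans : has_HGS_type gT dot.
Proof.
exists rtrans_group; split.
- exact: regular_rtrans.
- exact: op_isog_rtrans.
- exact: lambda_norm_rtrans.
Qed.

End RightTranslation.

Lemma skew_brace_has_HGS_type (B : Type) (dot circ : B -> B -> B)
    (gT : finGroupType) (phi : B -> gT) :
  skew_brace dot circ -> bijective phi ->
  {morph phi : a b / circ a b >-> a * b} -> has_HGS_type gT dot.
Proof.
move=> [[dotA [e [dote dotV]]] [_ brace_law]] [psi phiK psiK] phiM.
have dot1x : left_id e dot by move=> a; case: (dote a).
have dotx1 : right_id e dot by move=> a; case: (dote a).
exact: (has_HGS_type_rtrans dotA dot1x dotx1 dotV phiK psiK phiM brace_law).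
Qed.

Lemma op_isog_subg (B : choiceType) (op : B -> B -> B) (gT : finGroupType)
    (G : {group gT}) :
  op_isog op G -> exists2 phi : B -> subg_of G,
    bijective phi & {morph phi : a b / op a b >-> a * b}.
Proof.
move=> [f [f_inj [fG [f_onto fM]]]].
pose phi b : subg_of G := subg G (f b).
have phiE b : val (phi b) = f b by rewrite subgK.
have phi_onto x : exists b, phi b == x.
  by have [b fb] := f_onto _ (subgP x); exists b; apply/eqP/val_inj; rewrite phiE.
have phi_inj : injective phi by move=> a b phi_ab; apply: f_inj; rewrite -!phiE phi_ab.
exists phi; last by move=> a b; apply: val_inj; rewrite /= !phiE fM.
have psiK : cancel (fun x => xchoose (phi_onto x)) phi.
  by move=> x; apply/eqP; exact: (xchooseP (phi_onto x)).
by exists (fun x => xchoose (phi_onto x)) => // b; apply: phi_inj; rewrite psiK.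
Qed.

Theorem proposition5p1 (B : finType) (O : (B -> B -> B) -> Prop) :
  brace_block O ->
  forall circ star : B -> B -> B, O circ -> O star ->
  forall (F0 : fieldType) (L : splittingFieldType F0) (K E : {subfield L}),
    (K <= E)%VS -> galois K E ->
    op_isog circ ('Gal(E / K))%g ->
    galois_has_HGS_type K E star.
Proof.
move=> block circ star Ocirc Ostar F0 L K E _ _ /op_isog_subg[phi phi_bij phiM].
exact: (skew_brace_has_HGS_type (block _ _ Ostar Ocirc) phi_bij phiM).
Qed.
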